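(* Let $k=2$, $\lambda>0$ and $0<\theta<1$, and $F(x,y,\theta)=\frac{1+x+\theta y}{1+x+y}$. If either $\theta\ge1/3$, or $\theta<1/3$ and $\lambda\le\frac{9}{4(1-3\theta)}$, then the system $$z^-_1=\lambda F(z^-_1,z^+_2,\theta)^2,\ z^+_1=\lambda F(z^+_1,z^-_2,\theta)^2,\ z^-_2=\lambda F(z^-_2,z^+_1,\theta)^2,\ z^+_2=\lambda F(z^+_2,z^-_1,\theta)^2$$ has the unique solution $(x^*,x^*,x^*,x^* )$ in $(0,\infty)^4$, where $x^*$ is the unique positive solution of $x=\lambda\bigl(\frac{1+(1+\theta)x}{1+2x}\bigr)^2$. *)

From Stdlib Require Import Reals.
Open Scope R_scope.

Definition F (x y theta : R) : R := (1 + x + theta * y) / (1 + x + y).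

(* The k = 2 system in unknowns (z1m, z1p, z2m, z2p) = (z^-_1, z^+_1, z^-_2, z^+_2). *)
Definition system2 (lam theta z1m z1p z2m z2p : R) : Prop :=
  z1m = lam * (F z1m z2p theta) ^ 2 /\
  z1p = lam * (F z1p z2m theta) ^ 2 /\
  z2m = lam * (F z2m z1p theta) ^ 2 /\
  z2p = lam * (F z2p z1m theta) ^ 2.

From Stdlib Require Import Reals Lra Psatz.
Open Scope R_scope.

(* On the diagonal, F x x theta = G theta x := (1+(1+theta)x)/(1+2x), which is
   positive and strictly decreasing on [0,oo).  Hence x = lam*G(x)^2 has at most
   one positive root (left side increasing, right side decreasing), and it has one
   by the intermediate value theorem applied to x(1+2x)^2 - lam(1+(1+theta)x)^2 on
   [0,lam].
   The system couples the unknowns in the two pairs (z1m,z2p) and (z1p,z2m),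
   each pair (a,b) solving a = lam F(a,b)^2, b = lam F(b,a)^2.  Writing
   u = sqrt a, v = sqrt b, c = sqrt lam, the pair equations become polynomial, and
   an asymmetric solution u <> v forces, with s = u+v,
       (1-3theta) s^2 > 4    and    c(1+theta) s = s^2 - 1.
   The first is impossible for theta >= 1/3; the second then gives
   4(1-3theta) lam > 9, contradicting the bound on lam.  So a = b in each pair,
   each unknown is a positive diagonal fixed point, and all equal x*. *)

Definition G (theta x : R) : R := (1 + (1 + theta) * x) / (1 + 2 * x).

Lemma F_diag (theta x : R) : F x x theta = G theta x.
Proof. unfold F, G. f_equal; ring. Qed.

Section DiagonalFixedPoint.

Variables lam theta : R.
Hypothesis lam_pos : 0 < lam.
Hypothesis theta_range : 0 < theta < 1.

Lemma G_pos (x : R) : 0 <= x -> 0 < G theta x.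
Proof. intros. unfold G. apply Rdiv_lt_0_compat; nra. Qed.

(* G is strictly decreasing since its derivative is -(1-theta)/(1+2x)^2. *)
Lemma G_decreasing (x y : R) : 0 <= x -> x < y -> G theta y < G theta x.
Proof.
  intros hx hxy.
  assert (Hdiff : G theta x - G theta y = (1 - theta) * (y - x) / ((1 + 2 * x) * (1 + 2 * y))).
  { unfold G. field. split; lra. }
  assert (0 < (1 - theta) * (y - x) / ((1 + 2 * x) * (1 + 2 * y))).
  { apply Rdiv_lt_0_compat; nra. }
  lra.
Qed.

(* Uniqueness: x -> lam*G(x)^2 is decreasing, so it meets the identity at most once. *)
Lemma diag_fixed_point_unique (x y : R) :
  0 < x -> 0 < y -> x = lam * G theta x ^ 2 -> y = lam * G theta y ^ 2 -> x = y.
Proof.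
  intros hx hy Ex Ey.
  assert (Hmono : forall p q, 0 < p -> p < q ->
            lam * G theta q ^ 2 < lam * G theta p ^ 2).
  { intros p q hp hpq.
    pose proof (G_decreasing p q (Rlt_le _ _ hp) hpq).
    pose proof (G_pos q (Rlt_le _ _ (Rlt_trans _ _ _ hp hpq))).
    apply Rmult_lt_compat_l; [exact lam_pos | nra]. }
  destruct (Rtotal_order x y) as [h | [h | h]]; [| exact h |].
  - specialize (Hmono x y hx h). lra.
  - specialize (Hmono y x hy h). lra.
Qed.

(* Existence: the cubic x(1+2x)^2 - lam(1+(1+theta)x)^2 changes sign on [0,lam]. *)
Lemma diag_fixed_point_exists : exists xs, 0 < xs /\ xs = lam * G theta xs ^ 2.
Proof.
  set (h := fun x => x * (1 + 2 * x) ^ 2 - lam * (1 + (1 + theta) * x) ^ 2).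
  assert (h_cont : continuity h) by (unfold h; reg).
  assert (h_at0 : h 0 < 0) by (unfold h; lra).
  assert (h_atlam : 0 < h lam).
  { unfold h.
    assert (0 < 1 + (1 + theta) * lam) by nra.
    assert (1 + (1 + theta) * lam < 1 + 2 * lam) by nra.
    assert ((1 + (1 + theta) * lam) ^ 2 < (1 + 2 * lam) ^ 2) by nra.
    nra. }
  destruct (IVT h 0 lam h_cont lam_pos h_at0 h_atlam) as [xs [[hxs0 _] hroot]].
  assert (xs_pos : 0 < xs).
  { destruct hxs0 as [| e]; [assumption | subst xs; lra]. }
  exists xs. split; [exact xs_pos |].
  unfold G, h in *.
  apply (Rmult_eq_reg_r ((1 + 2 * xs) ^ 2)); [| nra].
  field_simplify; [lra | lra].
Qed.

End DiagonalFixedPoint.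

Section AsymmetricPairs.

(* Square-root variables: u = sqrt a, v = sqrt b, c = sqrt lam, s = u + v. *)
Variables u v c theta : R.
Hypothesis c_pos : 0 < c.
Hypothesis theta_range : 0 < theta < 1.
Hypothesis pair_u : u * (1 + u * u + v * v) = c * (1 + u * u + theta * (v * v)).
Hypothesis pair_v : v * (1 + v * v + u * u) = c * (1 + v * v + theta * (u * u)).
Hypothesis u_neq_v : u <> v.

(* Subtracting and adding the two pair equations (dividing by u - v) yields
   the product uv and the scale c in terms of the sum s = u + v. *)
Lemma asym_pair_relations :
  (1 + theta) * (u * v) = 1 + theta * ((u + v) * (u + v)) /\
  c * (1 + theta) * (u + v) = (u + v) * (u + v) - 1.
Proof.
  assert (Hd : u - v <> 0) by lra.
  assert (Hdiff : 1 + u * u + v * v = c * (1 - theta) * (u + v)).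
  { apply (Rmult_eq_reg_l (u - v)); [nra | exact Hd]. }
  assert (Hsum : (1 - theta) * ((u + v) * (u + v)) = 2 + (1 + theta) * (u * u + v * v)).
  { apply (Rmult_eq_reg_l c); [| lra].
    assert (S : (u + v) * (1 + u * u + v * v) = c * (2 + (1 + theta) * (u * u + v * v)))
      by nra.
    rewrite Hdiff in S. nra. }
  assert (Hprod : (1 + theta) * (u * v) = 1 + theta * ((u + v) * (u + v))) by nra.
  split; [exact Hprod |].
  apply (Rmult_eq_reg_l (1 - theta)); [nra | lra].
Qed.

(* Since 4uv < s^2 strictly, the product relation forces (1-3theta)s^2 > 4. *)
Lemma asym_pair_sum_large : 4 < (1 - 3 * theta) * ((u + v) * (u + v)).
Proof.
  destruct asym_pair_relations as [Hprod _].
  assert (0 < (u - v) * (u - v)) by (destruct (Rlt_or_le u v); nra).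
  nra.
Qed.

End AsymmetricPairs.

(* With m = 1-3theta, t = s^2 and c(1+theta)s = t-1, the identity
   4m(t-1)^2 - 9(1+theta)^2 t = (mt-4)(4t-m) shows 4m c^2 > 9 once mt > 4. *)
Lemma scale_exceeds_threshold (c s theta : R) :
  0 < s -> 0 < theta < 1 ->
  4 < (1 - 3 * theta) * (s * s) -> c * (1 + theta) * s = s * s - 1 ->
  9 < c * c * (4 * (1 - 3 * theta)).
Proof.
  intros hs ht Hlarge Hc.
  set (m := 1 - 3 * theta) in *. set (t := s * s) in *.
  assert (m_le1 : m <= 1) by (unfold m; lra).
  assert (t_pos : 0 < t) by (unfold t; nra).
  assert (m_pos : 0 < m) by nra.
  assert (t_gt1 : 1 < t) by nra.
  assert (Hid : c * c * (4 * m) * ((1 + theta) * (1 + theta) * t) - 9 * ((1 + theta) * (1 + theta) * t)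
                = (m * t - 4) * (4 * t - m)).
  { assert (Esq : c * c * ((1 + theta) * (1 + theta)) * t = (t - 1) * (t - 1))
      by (rewrite <- Hc; unfold t; ring).
    unfold m in *. nra. }
  assert (0 < (m * t - 4) * (4 * t - m)) by (apply Rmult_lt_0_compat; unfold m in *; lra).
  assert (0 < (1 + theta) * (1 + theta) * t) by (unfold t; nra).
  nra.
Qed.

Lemma sqrt_scaled_square (c y x : R) : 0 < c -> 0 < y -> x = c * c * y ^ 2 -> sqrt x = c * y.
Proof.
  intros hc hy Ex.
  replace x with (c * y * (c * y)) by (rewrite Ex; ring).
  apply sqrt_square. nra.
Qed.

Lemma pair_equation_in_roots (c theta a b : R) :
  0 < c -> 0 < theta < 1 -> 0 < a -> 0 < b -> a = c * c * F a b theta ^ 2 ->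
  sqrt a * (1 + a + b) = c * (1 + a + theta * b).
Proof.
  intros hc ht ha hb Ea.
  assert (F_pos : 0 < F a b theta) by (unfold F; apply Rdiv_lt_0_compat; nra).
  rewrite (sqrt_scaled_square c (F a b theta) a hc F_pos Ea).
  unfold F. field. lra.
Qed.

Lemma pair_solution_symmetric (lam theta a b : R) :
  0 < lam -> 0 < theta < 1 ->
  (1/3 <= theta \/ (theta < 1/3 /\ lam <= 9 / (4 * (1 - 3 * theta)))) ->
  0 < a -> 0 < b -> a = lam * F a b theta ^ 2 -> b = lam * F b a theta ^ 2 -> a = b.
Proof.
  intros hl ht hcond ha hb Ea Eb.
  set (c := sqrt lam).
  assert (hc : 0 < c) by (apply sqrt_lt_R0; lra).
  assert (Cl : c * c = lam) by (apply sqrt_sqrt; lra).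
  rewrite <- Cl in Ea, Eb.
  pose proof (pair_equation_in_roots c theta a b hc ht ha hb Ea) as pair_u.
  pose proof (pair_equation_in_roots c theta b a hc ht hb ha Eb) as pair_v.
  assert (Ua : a = sqrt a * sqrt a) by (symmetry; apply sqrt_sqrt; lra).
  assert (Vb : b = sqrt b * sqrt b) by (symmetry; apply sqrt_sqrt; lra).
  pose proof (sqrt_lt_R0 a ha) as hu. pose proof (sqrt_lt_R0 b hb) as hv.
  set (u := sqrt a) in *. set (v := sqrt b) in *.
  rewrite Ua, Vb in pair_u, pair_v.
  destruct (Req_dec u v) as [huv | huv]; [rewrite Ua, Vb, huv; reflexivity | exfalso].
  pose proof (asym_pair_sum_large u v c theta hc ht pair_u pair_v huv) as Hlarge.
  destruct (asym_pair_relations u v c theta hc ht pair_u pair_v huv) as [_ Hscale].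
  destruct hcond as [theta_large | [theta_small lam_bound]].
  - assert (sum_sq : 0 <= (u + v) * (u + v)) by apply Rle_0_sqr.
    clear - theta_large Hlarge sum_sq. nra.
  - pose proof (scale_exceeds_threshold c (u + v) theta ltac:(lra) ht Hlarge Hscale).
    apply (Rmult_le_compat_r (4 * (1 - 3 * theta))) in lam_bound; [| lra].
    replace (9 / (4 * (1 - 3 * theta)) * (4 * (1 - 3 * theta))) with 9 in lam_bound
      by (field; lra).
    rewrite <- Cl in lam_bound. lra.
Qed.

Theorem mainTheorem15 (lam theta : R) :
  0 < lam -> 0 < theta < 1 ->
  (1/3 <= theta \/ (theta < 1/3 /\ lam <= 9 / (4 * (1 - 3 * theta)))) ->
  exists xs : R,
    (0 < xs /\ xs = lam * ((1 + (1 + theta) * xs) / (1 + 2 * xs)) ^ 2) /\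
    (forall x : R, 0 < x -> x = lam * ((1 + (1 + theta) * x) / (1 + 2 * x)) ^ 2 -> x = xs) /\
    system2 lam theta xs xs xs xs /\
    (forall z1m z1p z2m z2p : R,
        0 < z1m -> 0 < z1p -> 0 < z2m -> 0 < z2p ->
        system2 lam theta z1m z1p z2m z2p ->
        z1m = xs /\ z1p = xs /\ z2m = xs /\ z2p = xs).
Proof.
  intros hl ht hcond.
  destruct (diag_fixed_point_exists lam theta hl ht) as [xs [xs_pos xs_fix]].
  exists xs.
  split; [split; assumption |].
  split; [intros x hx Ex; exact (diag_fixed_point_unique lam theta hl ht x xs hx xs_pos Ex xs_fix) |].
  split; [unfold system2; rewrite F_diag; repeat split; exact xs_fix |].
  intros z1m z1p z2m z2p h1 h2 h3 h4 [E1 [E2 [E3 E4]]].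
  assert (e1 : z1m = z2p) by (apply (pair_solution_symmetric lam theta); assumption).
  assert (e2 : z1p = z2m) by (apply (pair_solution_symmetric lam theta); assumption).
  subst z2p z2m. rewrite F_diag in E1, E2.
  pose proof (diag_fixed_point_unique lam theta hl ht z1m xs h1 xs_pos E1 xs_fix).
  pose proof (diag_fixed_point_unique lam theta hl ht z1p xs h2 xs_pos E2 xs_fix).
  repeat split; assumption.
Qed.
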